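(* Let $\mathcal T=(\mathbf T^{(1)},\dots,\mathbf T^{(n)})$ be an MPS with contraction $\mathbf T\neq0$, let $1\le j\le n$ and $\epsilon>0$, and let $\hat{\mathbf T}$ be the contraction after replacing $\mathbf T^{(j)}$ by $\mathbf T^{(j)}+\delta^{(j)}$ with $\|\delta^{(j)}\|_F\le\epsilon\|\mathbf T^{(j)}\|_F$. Then $$\frac{\|\mathbf T-\hat{\mathbf T}\|_F}{\|\mathbf T\|_F}\le\epsilon\,\frac{\|T^{[1,j-1]}_{\rightarrow}\|_2\,\|\mathbf T^{(j)}\|_F\,\|T^{[j+1,n]}_{\leftarrow}\|_2}{\|\mathbf T\|_F}+O(\epsilon^2),$$ and if $\mathcal T$ is in canonical form centered at site $j$ then $\frac{\|\mathbf T-\hat{\mathbf T}\|_F}{\|\mathbf T\|_F}\le\epsilon+O(\epsilon^2)$. Both bounds are tight (attained by some admissible $\delta^{(j)}$), and the first bound is always at least $\epsilon$.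
   Context: MPS: an MPS with $n$ sites is a tensor network on a path: site $j$ carries a physical (uncontracted) leg $p_j$, and for $1\le j\le n-1$ a bond (contracted leg) $b_j$ of dimension $D_j$ joins sites $j$ and $j+1$; $\mathbf T^{(1)}$ has legs $(p_1,b_1)$, $\mathbf T^{(n)}$ has legs $(b_{n-1},p_n)$, and $\mathbf T^{(j)}$ for $1<j<n$ has legs $(b_{j-1},p_j,b_j)$. The contraction $\mathbf T$ sums over all bond indices the product of the site entries. For $a\le b$, $\mathbf T^{[a,b]}$ is the contraction of sites $a,\dots,b$ only (its open legs are $p_a,\dots,p_b$ together with $b_{a-1}$ if $a>1$ and $b_b$ if $b<n$). $T^{[1,j-1]}_\rightarrow$ is the matricization of $\mathbf T^{[1,j-1]}$ with rows indexed by $p_1,\dots,p_{j-1}$ and columns by $b_{j-1}$; $T^{[j+1,n]}_\leftarrow$ is the matricization of $\mathbf T^{[j+1,n]}$ with rows indexed by $p_{j+1},\dots,p_n$ and columns by $b_j$. By convention $\|T^{[1,0]}_\rightarrow\|_2=\|T^{[n+1,n]}_\leftarrow\|_2=1$. The environment matrix of site $j$ is the matrix of the linear map $X\mapsto\mathrm{vec}$(contraction with $X$ in place of $\mathbf T^{(j)}$); the MPS is in canonical form centered at site $j$ if this matrix is an isometry. $\|\cdot\|_F$ Frobenius norm, $\|\cdot\|_2$ spectral norm. *)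

From HB Require Import structures.
From mathcomp Require Import all_boot all_order all_algebra.
From Stdlib Require Import ClassicalEpsilon.
Unset Printing Implicit Defensive.
Import Order.TTheory GRing.Theory Num.Theory.
Local Open Scope ring_scope.

(* Conventions (sites are numbered 1..n as in the paper).                 *)
(*  d k        : dimension of the physical leg p_k  (1 <= k <= n)         *)
(*  D k        : dimension of the bond b_k (1 <= k <= n-1); the boundary  *)
(*               tensors are encoded with dummy bonds b_0, b_n of         *)
(*               dimension D 0 = D n = 1 (imposed as hypotheses).         *)
(*  A k a q b  : entry of T^(k) at (b_{k-1} = a, p_k = q, b_k = b);       *)
(*               only entries with a < D (k-1), q < d k, b < D k are      *)
(*               ever used.                                               *)
(*  A physical configuration is a function p : nat -> nat (p k = index    *)
(*  of leg p_k).                                                          *)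

Definition cfg (d : nat -> nat) (a m : nat) :=
  {dffun forall i : 'I_m, 'I_(d (a + i)%N)}.

Definition cfg_nat {d : nat -> nat} {a m : nat} (c : cfg d a m) : nat -> nat :=
  fun k => if (a <= k)%N then
             match @insub nat (fun x => x < m)%N _ (k - a)%N with
             | Some i => nat_of_ord (c i)
             | None => 0%N
             end
           else 0%N.

(* contraction of the sites a, ..., a+m-1 (a >= 1) for the physical        *)
(* configuration p, with open left bond b_{a-1} = l and right bond         *)
(* b_{a+m-1} = r  (for m = 0 this is the identity on b_{a-1})              *)
Fixpoint seg {R : rcfType} (D : nat -> nat) (A : nat -> nat -> nat -> nat -> R)
    (p : nat -> nat) (a m l r : nat) {struct m} : R :=
  match m with
  | 0 => (l == r)%:R
  | m'.+1 => \sum_(c < D (a + m').-1)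
               seg D A p a m' l c * A (a + m')%N c (p (a + m')%N) r
  end.

Definition contr {R : rcfType} (D : nat -> nat) (n : nat)
    (A : nat -> nat -> nat -> nat -> R) (p : nat -> nat) : R :=
  seg D A p 1 n 0 0.

Definition tnorm {R : rcfType} (d : nat -> nat) (n : nat) (T : (nat -> nat) -> R) : R :=
  Num.sqrt (\sum_(c : cfg d 1 n) T (cfg_nat c) ^+ 2).

Definition snorm {R : rcfType} (d D : nat -> nat) (j : nat)
    (X : nat -> nat -> nat -> R) : R :=
  Num.sqrt (\sum_(a < D j.-1) \sum_(q < d j) \sum_(b < D j) X a q b ^+ 2).

Definition replace {R : rcfType} (A : nat -> nat -> nat -> nat -> R) (j : nat)
    (X : nat -> nat -> nat -> R) : nat -> nat -> nat -> nat -> R :=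
  fun k => if k == j then X else A k.

Definition perturb {R : rcfType} (A : nat -> nat -> nat -> nat -> R) (j : nat)
    (delta : nat -> nat -> nat -> R) :=
  replace A j (fun a q b => A j a q b + delta a q b).

Definition relerr {R : rcfType} (d D : nat -> nat) (n : nat)
    (A : nat -> nat -> nat -> nat -> R) (j : nat) (delta : nat -> nat -> nat -> R) : R :=
  tnorm d n (fun p => contr D n A p - contr D n (perturb A j delta) p)
  / tnorm d n (contr D n A).

Definition vnorm {R : rcfType} {J : finType} (x : J -> R) : R :=
  Num.sqrt (\sum_(i : J) x i ^+ 2).

Definition mxapp {R : rcfType} {I J : finType} (M : I -> J -> R) (x : J -> R) : I -> R :=
  fun i => \sum_(k : J) M i k * x k.

Definition is_specnorm {R : rcfType} {I J : finType} (M : I -> J -> R) (s : R) : Prop :=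
  (forall x : J -> R, vnorm (mxapp M x) <= s * vnorm x) /\
  (forall t : R, (forall x : J -> R, vnorm (mxapp M x) <= t * vnorm x) -> s <= t).

Definition specnorm {R : rcfType} {I J : finType} (M : I -> J -> R) : R :=
  epsilon (inhabits 0) (is_specnorm M).

Definition Lmat {R : rcfType} (d D : nat -> nat) (A : nat -> nat -> nat -> nat -> R)
    (j : nat) : cfg d 1 j.-1 -> 'I_(D j.-1) -> R :=
  fun c b => seg D A (cfg_nat c) 1 j.-1 0 b.

Definition Rmat {R : rcfType} (d D : nat -> nat) (n : nat)
    (A : nat -> nat -> nat -> nat -> R) (j : nat) : cfg d j.+1 (n - j) -> 'I_(D j) -> R :=
  fun c b => seg D A (cfg_nat c) j.+1 (n - j) b 0.

(* canonical form centered at j: the environment map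
   X |-> vec(contraction with X in place of T^(j)) is an isometry *)
Definition canonical_at {R : rcfType} (d D : nat -> nat) (n : nat)
    (A : nat -> nat -> nat -> nat -> R) (j : nat) : Prop :=
  forall X : nat -> nat -> nat -> R,
    tnorm d n (contr D n (replace A j X)) = snorm d D j X.

From HB Require Import structures.
From mathcomp Require Import all_boot all_order all_algebra.
From mathcomp Require Import zify ring.
From mathcomp Require Import sesquilinear spectral.
From mathcomp.real_closed Require Import complex.
From Stdlib Require Import FunctionalExtensionality ClassicalEpsilon.
Set Implicit Arguments. Unset Strict Implicit. Unset Printing Implicit Defensive.
Import Order.TTheory GRing.Theory Num.Theory.
Local Open Scope ring_scope.

(* The contraction is linear in the site tensor T^(j) and factors through its
   environment: T(p) = sum_(a,b) L(p_1..p_(j-1), a) T^(j)(a, p_j, b) R(p_(j+1)..p_n, b).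
   Hence T - T' is the contraction with delta in place of T^(j) (so the O(eps^2)
   term vanishes), and applying L and R one leg at a time bounds its norm by
   ||L||_2 ||delta||_F ||R||_2.  This is attained by delta = c x_L (x) e_q (x) x_R,
   where x_L, x_R are unit vectors realising the spectral norms; they exist because
   the Gram matrix of a real matrix has a real eigenvector for its largest
   eigenvalue (spectral theorem for its complexification).  In canonical form the
   environment map is an isometry, so the error is exactly ||delta||_F, attained
   by delta = eps T^(j); and delta = T^(j) in the general bound gives X >= 1. *)

Section SegmentContraction.
Variables (R : rcfType) (D : nat -> nat) (B : nat -> nat -> nat -> nat -> R).

Lemma segS p a m l r :
  seg D B p a m.+1 l r =
  \sum_(c < D (a + m).-1) seg D B p a m l c * B (a + m)%N c (p (a + m)%N) r.
Proof. by []. Qed.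

Lemma eq_seg (B' : nat -> nat -> nat -> nat -> R) p p' a m :
  (forall k, (a <= k < a + m)%N -> p k = p' k /\ B k = B' k) ->
  forall l r, seg D B p a m l r = seg D B' p' a m l r.
Proof.
elim: m => [//|m IH] eqB l r; rewrite !segS.
have [-> ->] : p (a + m)%N = p' (a + m)%N /\ B (a + m)%N = B' (a + m)%N.
  by apply: eqB; lia.
by apply: eq_bigr => c _; rewrite IH // => k hk; apply: eqB; lia.
Qed.

Lemma segD p a m1 m2 l r : (r < D (a + m1 + m2).-1)%N ->
  seg D B p a (m1 + m2) l r =
  \sum_(c < D (a + m1).-1) seg D B p a m1 l c * seg D B p (a + m1) m2 c r.
Proof.
elim: m2 l r => [|m2 IH] l r lt_r.
  rewrite addn0 in lt_r; rewrite addn0 (bigD1 (Ordinal lt_r)) //= eqxx mulr1.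
  rewrite big1 ?addr0 // => c neq_cr; case: eqP => [eq_cr|_]; last by rewrite mulr0.
  by case/eqP: neq_cr; apply: val_inj.
rewrite addnS segS !addnA.
under eq_bigr => c _ do rewrite IH // mulr_suml.
rewrite exchange_big /=; apply: eq_bigr => c' _.
by rewrite mulr_sumr; apply: eq_bigr => c _; rewrite mulrA.
Qed.

Lemma seg1 p a l r : (l < D a.-1)%N -> seg D B p a 1 l r = B a l (p a) r.
Proof.
move=> lt_l; rewrite segS addn0 (bigD1 (Ordinal lt_l)) //= eqxx mul1r big1 ?addr0 //.
move=> c neq_cl; case: eqP => [eq_cl|_]; last by rewrite mul0r.
by case/eqP: neq_cl; apply: val_inj.
Qed.

Lemma contr_split_at p n j : D n = 1%N -> (1 <= j <= n)%N ->
  contr D n B p = \sum_(a < D j.-1) \sum_(b < D j)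
     seg D B p 1 j.-1 0 a * B j a (p j) b * seg D B p j.+1 (n - j) b 0.
Proof.
move=> Dn lejn; have {1}-> : n = (j.-1 + (1 + (n - j)))%N by lia.
rewrite /contr segD; last by rewrite (_ : (1 + j.-1 + _).-1 = n)%N ?Dn //; lia.
rewrite (_ : (1 + j.-1 = j)%N); last by lia.
apply: eq_bigr => a _; rewrite segD; last by rewrite (_ : (j + 1 + _).-1 = n)%N ?Dn //; lia.
rewrite addn1 mulr_sumr; apply: eq_bigr => b _.
by rewrite seg1 // mulrA.
Qed.

End SegmentContraction.

Section Configurations.
Variable d : nat -> nat.

Lemma cfg_nat_val a m (c : cfg d a m) (i : 'I_m) : cfg_nat c (a + i) = c i.
Proof. by rewrite /cfg_nat leq_addr addKn valK. Qed.

Lemma cfg_nat_out a m (c : cfg d a m) k : ~~ (a <= k < a + m)%N -> cfg_nat c k = 0%N.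
Proof.
move=> out_k; rewrite /cfg_nat; case: ifP => // le_ak.
by rewrite insubF //; apply: contraNF out_k; rewrite le_ak /=; lia.
Qed.

Lemma cfg_nat_lt a m (c : cfg d a m) k : (a <= k < a + m)%N -> (cfg_nat c k < d k)%N.
Proof.
move=> in_k; have lt_k : (k - a < m)%N by lia.
by have := ltn_ord (c (Ordinal lt_k)); rewrite -cfg_nat_val /= subnKC //; lia.
Qed.

Lemma cfg_nat_inj a m : injective (@cfg_nat d a m).
Proof.
move=> c c' eq_cc'; apply/ffunP => i; apply: val_inj => /=.
by rewrite -!cfg_nat_val eq_cc'.
Qed.

Definition mkcfg a m (v : nat -> nat) (lt_v : forall i : 'I_m, (v (a + i) < d (a + i))%N) :
  cfg d a m := [ffun i => Ordinal (lt_v i)].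

Lemma cfg_nat_mk a m v lt_v k :
  cfg_nat (@mkcfg a m v lt_v) k = if (a <= k < a + m)%N then v k else 0%N.
Proof.
case: ifP => in_k; last by rewrite cfg_nat_out ?in_k.
have lt_k : (k - a < m)%N by lia.
by have := cfg_nat_val (mkcfg lt_v) (Ordinal lt_k); rewrite ffunE /= subnKC //; lia.
Qed.

Lemma cfg_nat_restr_lt a m (c : cfg d a m) a' m' : (a <= a')%N -> (a' + m' <= a + m)%N ->
  forall i : 'I_m', (cfg_nat c (a' + i) < d (a' + i))%N.
Proof. by move=> le_a le_m i; apply: cfg_nat_lt; have := ltn_ord i; lia. Qed.

Section Gluing.
Variables (n j : nat).
Hypothesis lejn : (1 <= j <= n)%N.

Local Notation triple := (cfg d 1 j.-1 * ('I_(d j) * cfg d j.+1 (n - j)))%type.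

Definition cfg_glue (x : triple) : nat -> nat := fun k =>
  if (k < j)%N then cfg_nat x.1 k else if k == j then nat_of_ord x.2.1 else cfg_nat x.2.2 k.

Lemma cfg_glue_lt x (i : 'I_n) : (cfg_glue x (1 + i) < d (1 + i))%N.
Proof.
have := ltn_ord i; rewrite /cfg_glue; case: (ltnP (1 + i) j) => [lt_ij|le_ji] lt_in.
  by apply: cfg_nat_lt; lia.
case: eqP => [eq_ij|neq_ij]; last by apply: cfg_nat_lt; lia.
by have := ltn_ord x.2.1; move: (nat_of_ord _) => v; rewrite -eq_ij.
Qed.

Definition glue (x : triple) : cfg d 1 n := mkcfg (cfg_glue_lt x).

Fact cut_left_subproof : (1 + j.-1 <= 1 + n)%N. Proof. lia. Qed.
Fact cut_mid_subproof : (1 <= j < 1 + n)%N. Proof. lia. Qed.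
Fact cut_right_subproof : (j.+1 + (n - j) <= 1 + n)%N. Proof. lia. Qed.

Definition cut (c : cfg d 1 n) : triple :=
  (mkcfg (cfg_nat_restr_lt c (leqnn 1) cut_left_subproof),
   (Ordinal (cfg_nat_lt c cut_mid_subproof),
    mkcfg (cfg_nat_restr_lt c (ltn0Sn j) cut_right_subproof))).

Lemma cfg_nat_glue x : cfg_nat (glue x) = cfg_glue x.
Proof.
apply: functional_extensionality => k; rewrite cfg_nat_mk /cfg_glue.
case: ifP => in_k; first by case: ltnP => //; case: eqP.
case: ltnP => lt_kj; first by rewrite cfg_nat_out //; lia.
by case: eqP => eq_kj; [lia | rewrite cfg_nat_out //; lia].
Qed.

Lemma glueK : cancel glue cut.
Proof.
move=> [c1 [q c2]]; congr (_, (_, _)).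
- apply: cfg_nat_inj; apply: functional_extensionality => k.
  rewrite !cfg_nat_mk /cfg_glue /=.
  case: ifP => in_k; first by rewrite ifT ?ifT //; lia.
  by rewrite cfg_nat_out //; lia.
- by apply: val_inj; rewrite /= cfg_nat_glue /cfg_glue ltnn eqxx.
- apply: cfg_nat_inj; apply: functional_extensionality => k.
  rewrite !cfg_nat_mk /cfg_glue /=.
  case: ifP => in_k; last by rewrite cfg_nat_out //; lia.
  rewrite ifT; last by lia.
  by rewrite !ifF //; [apply/negbTE/eqP | ]; lia.
Qed.

Lemma cutK : cancel cut glue.
Proof.
move=> c; apply: cfg_nat_inj; rewrite cfg_nat_glue.
apply: functional_extensionality => k; rewrite /cfg_glue /=.
case: ltnP => lt_kj.
  by rewrite cfg_nat_mk; case: ifP => // out_k; rewrite cfg_nat_out //; lia.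
case: eqP => [-> //|neq_kj].
by rewrite cfg_nat_mk; case: ifP => // out_k; rewrite cfg_nat_out //; lia.
Qed.

Lemma sum_cfg_glue (V : zmodType) (F : (nat -> nat) -> V) :
  \sum_(c : cfg d 1 n) F (cfg_nat c) =
  \sum_(c1 : cfg d 1 j.-1) \sum_(q < d j) \sum_(c2 : cfg d j.+1 (n - j))
    F (cfg_glue (c1, (q, c2))).
Proof.
rewrite (reindex glue); last by exists cut => x _; [apply: glueK | apply: cutK].
under [RHS]eq_bigr => c1 _ do rewrite pair_bigA.
by rewrite [RHS]pair_bigA; apply: eq_bigr => -[c1 [q c2]] _; rewrite cfg_nat_glue.
Qed.

End Gluing.

End Configurations.

Section DiagonalQuadraticForm.
Local Open Scope sesquilinear_scope.
Variable C : numClosedFieldType.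

Lemma diag_quad_le k (sp : 'rV[C]_k) (m : C) (y : 'rV[C]_k) :
  (forall i, sp 0 i <= m) -> (y *m diag_mx sp *m y^t*) 0 0 <= m * (y *m y^t*) 0 0.
Proof.
move=> le_sp_m; rewrite mul_mx_diag !mxE mulr_sumr; apply: ler_sum => i _.
by rewrite !mxE mulrAC [m * _]mulrC -normCK ler_wpM2l ?exprn_ge0.
Qed.

End DiagonalQuadraticForm.

Section RealSymmetricMatrix.
Local Open Scope sesquilinear_scope.
Variable R : rcfType.
Local Notation toC := (real_complex R).
Local Notation Re := (@complex.Re R).
Local Notation Im := (@complex.Im R).

Lemma ler_toC (a b : R) : (toC a <= toC b) = (a <= b).
Proof. by rewrite lecE /= eqxx. Qed.

Lemma Re_mul_toC (z : R[i]) a : Re (z * toC a) = Re z * a.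
Proof. by case: z => x y /=; rewrite mulr0 subr0. Qed.

Lemma Im_mul_toC (z : R[i]) a : Im (z * toC a) = Im z * a.
Proof. by case: z => x y /=; rewrite mulr0 add0r. Qed.

Lemma real_eigenvector k (S : 'M[R]_k) (lam : R) (u : 'rV[R[i]]_k) :
  u != 0 -> u *m map_mx toC S = toC lam *: u ->
  exists2 v : 'rV[R]_k, v != 0 & v *m S = lam *: v.
Proof.
move=> u_neq0 eig_u.
have eig_Re : map_mx Re u *m S = lam *: map_mx Re u.
  apply/rowP => i; have /rowP/(_ i) := eig_u; rewrite !mxE => /(congr1 Re).
  rewrite raddf_sum [_ * u 0 i]mulrC Re_mul_toC mulrC => <-.
  by apply: eq_bigr => l _; rewrite !mxE /= Re_mul_toC.
have eig_Im : map_mx Im u *m S = lam *: map_mx Im u.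
  apply/rowP => i; have /rowP/(_ i) := eig_u; rewrite !mxE => /(congr1 Im).
  rewrite raddf_sum [_ * u 0 i]mulrC Im_mul_toC mulrC => <-.
  by apply: eq_bigr => l _; rewrite !mxE /= Im_mul_toC.
have [Re0|] := eqVneq (map_mx Re u) 0; last by exists (map_mx Re u).
exists (map_mx Im u) => //; apply: contraNneq u_neq0 => Im0.
apply/eqP/rowP => i; move/rowP/(_ i): Re0; move/rowP/(_ i): Im0; rewrite !mxE.
by case: (u 0 i) => a b /= -> ->.
Qed.

Lemma symmx_max_eigen k (S : 'M[R]_k.+1) : S^T = S ->
  exists lam, (exists2 v : 'rV_k.+1, v != 0 & v *m S = lam *: v) /\
    forall x : 'rV_k.+1, (x *m S *m x^T) 0 0 <= lam * (x *m x^T) 0 0.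
Proof.
move=> symS; pose SC := map_mx toC S; pose P := spectralmx SC; pose sp := spectral_diag SC.
have herm_SC : SC \is hermsymmx.
  apply: realsym_hermsym; last by apply/mxOverP => i j; rewrite mxE complex_real.
  by apply/is_hermitianmxP; rewrite expr0 scale1r map_mx_id // map_trmx symS.
have unit_P : P \is unitarymx := spectral_unitarymx SC.
have SCE : SC = P^t* *m diag_mx sp *m P.
  by rewrite -invmx_unitary //; apply/orthomx_spectralP/hermitian_normalmx.
have real_sp : sp \is a realmx := hermitian_spectral_diag_real herm_SC.
pose mu i := Re (sp 0 i).
have spE i : sp 0 i = toC (mu i) by rewrite RRe_real //; apply: (mxOverP real_sp).
pose i0 := [arg max_(i > ord0) mu i]%O.
have mu_max i : mu i <= mu i0 by rewrite /i0; case: arg_maxP => // l _; apply.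
exists (mu i0); split.
  have PPt : P *m P^t* = 1%:M by apply/unitarymxP.
  apply: (@real_eigenvector _ _ _ (row i0 P)).
    apply/negP => /eqP row0; have /rowP/(_ i0) := congr1 (row i0) PPt.
    by rewrite row_mul row0 mul0mx !mxE eqxx => /eqP; rewrite eq_sym oner_eq0.
  rewrite -row_mul -/SC SCE !mulmxA PPt mul1mx row_mul row_diag_mx -scalemxAl -rowE.
  by rewrite spE.
move=> x; rewrite -ler_toC rmorphM /=.
have adj_toC m n (M : 'M[R]_(m, n)) : (map_mx toC M)^t* = map_mx toC M^T.
  by apply/matrixP => i j; rewrite !mxE conj_Creal // complex_real.
have toC_entry (M : 'M[R]_1) : toC (M 0 0) = map_mx toC M 0 0 by rewrite mxE.
rewrite !toC_entry !map_mxM -!adj_toC -/SC SCE.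
have y_adj : (map_mx toC x *m P^t*)^t* = P *m (map_mx toC x)^t*.
  by rewrite trmx_mul map_mxM trmxCK.
have := @diag_quad_le _ _ sp (toC (mu i0)) (map_mx toC x *m P^t*).
rewrite y_adj !mulmxA mulmxKtV // => -> // i.
by rewrite !spE ler_toC.
Qed.

End RealSymmetricMatrix.

Section SpectralNorm.
Variable R : rcfType.

Lemma sqr_vnorm (J : finType) (x : J -> R) : vnorm x ^+ 2 = \sum_i x i ^+ 2.
Proof. by rewrite sqr_sqrtr // sumr_ge0 // => i _; apply: sqr_ge0. Qed.

Lemma vnormZ (J : finType) (c : R) (x : J -> R) : vnorm (fun i => c * x i) = `|c| * vnorm x.
Proof.
rewrite /vnorm; under eq_bigr do rewrite exprMn.
by rewrite -mulr_sumr sqrtrM ?sqr_ge0 // sqrtr_sqr.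
Qed.

Lemma mxappZ (I J : finType) (M : I -> J -> R) (c : R) (x : J -> R) :
  mxapp M (fun a => c * x a) = (fun i => c * mxapp M x i).
Proof.
apply: functional_extensionality => i; rewrite /mxapp mulr_sumr.
by apply: eq_bigr => a _; rewrite mulrCA.
Qed.

Definition gram_mx (I : finType) k (M : I -> 'I_k -> R) : 'M[R]_k :=
  \matrix_(a, b) \sum_i M i a * M i b.

Lemma gram_mx_quad (I : finType) k (M : I -> 'I_k -> R) (x : 'I_k -> R) :
  ((\row_a x a) *m gram_mx M *m (\row_a x a)^T) 0 0 = \sum_i mxapp M x i ^+ 2.
Proof.
rewrite mxE; under eq_bigr => b _ do rewrite !mxE mulr_suml.
under eq_bigr => b _ do under eq_bigr => a _ do rewrite !mxE mulr_sumr mulr_suml.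
under [RHS]eq_bigr => i _ do rewrite expr2 /mxapp mulr_suml.
under [RHS]eq_bigr => i _ do under eq_bigr => a _ do rewrite mulr_sumr.
rewrite [RHS]exchange_big /=; under [RHS]eq_bigr => a _ do rewrite exchange_big /=.
rewrite [RHS]exchange_big /=; apply: eq_bigr => b _; apply: eq_bigr => a _.
by apply: eq_bigr => i _; ring.
Qed.

Lemma row_sqnorm k (x : 'I_k -> R) : ((\row_a x a) *m (\row_a x a)^T) 0 0 = \sum_a x a ^+ 2.
Proof. by rewrite mxE; apply: eq_bigr => a _; rewrite !mxE expr2. Qed.

Lemma specnorm_attained (I : finType) k (M : I -> 'I_k.+1 -> R) :
  exists s, [/\ is_specnorm M s, 0 <= s & exists2 x, vnorm x = 1 & vnorm (mxapp M x) = s].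
Proof.
have sym_gram : (gram_mx M)^T = gram_mx M.
  by apply/matrixP => a b; rewrite !mxE; apply: eq_bigr => i _; rewrite mulrC.
have [lam [[v v_neq0 eig_v] le_lam]] := symmx_max_eigen sym_gram.
pose xv a := v 0 a; have xvE : \row_a xv a = v by apply/rowP => a; rewrite mxE.
have le_quad x : \sum_i mxapp M x i ^+ 2 <= lam * \sum_a x a ^+ 2.
  by rewrite -gram_mx_quad -row_sqnorm; apply: le_lam.
have eq_quad : \sum_i mxapp M xv i ^+ 2 = lam * \sum_a xv a ^+ 2.
  by rewrite -gram_mx_quad -row_sqnorm xvE eig_v -scalemxAl mxE.
have xv_pos : 0 < \sum_a xv a ^+ 2.
  rewrite lt_def sumr_ge0 ?andbT => [|a _]; last exact: sqr_ge0.
  apply: contra v_neq0 => /eqP sum0; apply/eqP/rowP => a; rewrite mxE.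
  by apply/eqP; rewrite -sqrf_eq0; apply/eqP/(psumr_eq0P _ sum0) => // b _; apply: sqr_ge0.
have lam_ge0 : 0 <= lam.
  by rewrite -(pmulr_lge0 _ xv_pos) -eq_quad sumr_ge0 // => i _; apply: sqr_ge0.
have vnorm_Mxv : vnorm (mxapp M xv) = Num.sqrt lam * vnorm xv.
  by rewrite /vnorm eq_quad sqrtrM.
have vnorm_xv_gt0 : 0 < vnorm xv by rewrite sqrtr_gt0.
exists (Num.sqrt lam); split; first split.
- by move=> x; rewrite /vnorm -sqrtrM // ler_wsqrtr.
- by move=> t /(_ xv); rewrite vnorm_Mxv ler_pM2r.
- exact: sqrtr_ge0.
- exists (fun a => (vnorm xv)^-1 * xv a).
    by rewrite vnormZ gtr0_norm ?invr_gt0 // mulVf // gt_eqF.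
  by rewrite mxappZ vnormZ gtr0_norm ?invr_gt0 // vnorm_Mxv mulrCA mulVf ?mulr1 // gt_eqF.
Qed.

Lemma specnorm_eq (I J : finType) (M : I -> J -> R) s : is_specnorm M s -> specnorm M = s.
Proof.
move=> sn_s; have [le_sn min_sn] := epsilon_spec (inhabits 0) _ (ex_intro _ s sn_s).
case: sn_s => le_s min_s.
by apply/eqP; rewrite eq_le min_sn ?min_s.
Qed.

Lemma specnorm_spec (I : finType) k (M : I -> 'I_k -> R) : (0 < k)%N ->
  [/\ is_specnorm M (specnorm M), 0 <= specnorm M &
      exists2 x, vnorm x = 1 & vnorm (mxapp M x) = specnorm M].
Proof.
case: k M => // k M _; have [s [sn_s s_ge0 attained]] := specnorm_attained M.
by rewrite (specnorm_eq sn_s).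
Qed.

Lemma sumsq_mxapp_le (I J : finType) (M : I -> J -> R) s x : is_specnorm M s -> 0 <= s ->
  \sum_i mxapp M x i ^+ 2 <= s ^+ 2 * \sum_j x j ^+ 2.
Proof.
move=> [le_s _] s_ge0; rewrite -!sqr_vnorm -exprMn.
by rewrite ler_sqr ?nnegrE ?mulr_ge0 ?sqrtr_ge0.
Qed.

End SpectralNorm.

Section Environment.
Variables (R : rcfType) (I1 I2 : finType) (kL K kR : nat).
Variables (Lm : I1 -> 'I_kL -> R) (Rm : I2 -> 'I_kR -> R).
Implicit Types Y Z : nat -> nat -> nat -> R.

(* With [Lm], [Rm] the contractions of the sites left and right of a site,
   [env_contr Y] is the paper's environment map applied to the site tensor [Y]. *)
Definition env_contr Y (c1 : I1) (q : nat) (c2 : I2) : R :=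
  \sum_(a < kL) \sum_(b < kR) Lm c1 a * Y a q b * Rm c2 b.

Definition env_sqnorm Y : R := \sum_c1 \sum_(q < K) \sum_c2 env_contr Y c1 q c2 ^+ 2.

Definition site_sqnorm Y : R := \sum_(a < kL) \sum_(q < K) \sum_(b < kR) Y a q b ^+ 2.

Definition ord_ext k (x : 'I_k -> R) : nat -> R :=
  fun a => if insub a is Some i then x i else 0.

Definition rank1_site (q0 : nat) (xL : 'I_kL -> R) (xR : 'I_kR -> R) : nat -> nat -> nat -> R :=
  fun a q b => (q == q0)%:R * ord_ext xL a * ord_ext xR b.

Lemma ord_extE k (x : 'I_k -> R) (i : 'I_k) : ord_ext x i = x i.
Proof. by rewrite /ord_ext valK. Qed.

Lemma env_contrD Y Z c1 q c2 :
  env_contr (fun a q b => Y a q b + Z a q b) c1 q c2 = env_contr Y c1 q c2 + env_contr Z c1 q c2.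
Proof.
rewrite /env_contr -big_split; apply: eq_bigr => a _.
by rewrite -big_split; apply: eq_bigr => b _ /=; ring.
Qed.

Lemma env_sqnormZ c Y : env_sqnorm (fun a q b => c * Y a q b) = c ^+ 2 * env_sqnorm Y.
Proof.
rewrite /env_sqnorm mulr_sumr; apply: eq_bigr => c1 _; rewrite mulr_sumr.
apply: eq_bigr => q _; rewrite mulr_sumr; apply: eq_bigr => c2 _.
rewrite -exprMn /env_contr mulr_sumr; congr (_ ^+ 2); apply: eq_bigr => a _.
by rewrite mulr_sumr; apply: eq_bigr => b _; ring.
Qed.

Lemma site_sqnormZ c Y : site_sqnorm (fun a q b => c * Y a q b) = c ^+ 2 * site_sqnorm Y.
Proof.
rewrite /site_sqnorm mulr_sumr; apply: eq_bigr => a _; rewrite mulr_sumr.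
by apply: eq_bigr => q _; rewrite mulr_sumr; apply: eq_bigr => b _; rewrite exprMn.
Qed.

Lemma env_sqnorm_le sL sR Y :
  is_specnorm Lm sL -> 0 <= sL -> is_specnorm Rm sR -> 0 <= sR ->
  env_sqnorm Y <= sL ^+ 2 * sR ^+ 2 * site_sqnorm Y.
Proof.
move=> snL sL_ge0 snR sR_ge0.
pose YR (q : nat) c2 (a : 'I_kL) := mxapp Rm (fun b : 'I_kR => Y a q b) c2.
have envE c1 q c2 : env_contr Y c1 q c2 = mxapp Lm (YR q c2) c1.
  rewrite /env_contr /mxapp; apply: eq_bigr => a _; rewrite /YR /mxapp mulr_sumr.
  by apply: eq_bigr => b _; ring.
rewrite /env_sqnorm exchange_big /=; under eq_bigr => q _ do rewrite exchange_big /=.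
apply: (@le_trans _ _ (\sum_(q < K) \sum_c2 sL ^+ 2 * \sum_a YR q c2 a ^+ 2)).
  apply: ler_sum => q _; apply: ler_sum => c2 _.
  by under eq_bigr => c1 _ do rewrite envE; apply: sumsq_mxapp_le.
under eq_bigr => q _ do rewrite -mulr_sumr exchange_big /=.
rewrite -mulr_sumr -mulrA ler_wpM2l ?sqr_ge0 // /site_sqnorm exchange_big /= mulr_sumr.
apply: ler_sum => q _; rewrite mulr_sumr; apply: ler_sum => a _.
exact: sumsq_mxapp_le.
Qed.

Lemma env_sqnorm_rank1 (q0 : 'I_K) xL xR :
  env_sqnorm (rank1_site q0 xL xR) = vnorm (mxapp Lm xL) ^+ 2 * vnorm (mxapp Rm xR) ^+ 2.
Proof.
rewrite !sqr_vnorm /env_sqnorm mulr_suml; apply: eq_bigr => c1 _.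
rewrite (bigD1 q0) //= [X in _ + X]big1 ?addr0 => [|q neq_q]; last first.
  apply: big1 => c2 _; rewrite /env_contr big1 ?expr0n // => a _.
  by apply: big1 => b _; rewrite /rank1_site val_eqE (negbTE neq_q) mulr0n !(mul0r, mulr0).
rewrite mulr_sumr; apply: eq_bigr => c2 _; rewrite -exprMn; congr (_ ^+ 2).
rewrite /env_contr /mxapp mulr_suml; apply: eq_bigr => a _; rewrite mulr_sumr.
by apply: eq_bigr => b _; rewrite /rank1_site eqxx !ord_extE mulr1n; ring.
Qed.

Lemma site_sqnorm_rank1 (q0 : 'I_K) xL xR :
  site_sqnorm (rank1_site q0 xL xR) = vnorm xL ^+ 2 * vnorm xR ^+ 2.
Proof.
rewrite !sqr_vnorm /site_sqnorm mulr_suml; apply: eq_bigr => a _.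
rewrite (bigD1 q0) //= [X in _ + X]big1 ?addr0 => [|q neq_q]; last first.
  by apply: big1 => b _; rewrite /rank1_site val_eqE (negbTE neq_q) mulr0n !mul0r expr0n.
rewrite mulr_sumr; apply: eq_bigr => b _.
by rewrite /rank1_site eqxx !ord_extE mulr1n mul1r exprMn.
Qed.

Lemma env_sqnorm_gt0_dims Y : 0 < env_sqnorm Y -> [&& 0 < kL, 0 < K & 0 < kR]%N.
Proof.
move=> /gt_eqF/negbT env_neq0; apply/and3P; split; rewrite lt0n;
  apply: contra env_neq0 => /eqP dim0; apply/eqP/big1 => c1 _.
- apply: big1 => q _; apply: big1 => c2 _; rewrite /env_contr big1 ?expr0n // => a _.
  by have := ltn_ord a; move: (nat_of_ord a) => v; rewrite dim0.
- by apply: big1 => q _; have := ltn_ord q; move: (nat_of_ord q) => v; rewrite dim0.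
- apply: big1 => q _; apply: big1 => c2 _; rewrite /env_contr big1 ?expr0n // => a _.
  by apply: big1 => b _; have := ltn_ord b; move: (nat_of_ord b) => v; rewrite dim0.
Qed.

End Environment.

Lemma snormE (R : rcfType) (d D : nat -> nat) j (Y : nat -> nat -> nat -> R) :
  snorm d D j Y = Num.sqrt (site_sqnorm (D j.-1) (d j) (D j) Y).
Proof. by []. Qed.

Section SitePerturbation.
Variables (R : rcfType) (n : nat) (d D : nat -> nat).
Variables (A : nat -> nat -> nat -> nat -> R) (j : nat).
Hypotheses (Dn : D n = 1%N) (lejn : (1 <= j <= n)%N).

Local Notation Lm := (Lmat d D A j).
Local Notation Rm := (Rmat d D n A j).
Local Notation env := (env_contr Lm Rm).
Local Notation env_sqn := (env_sqnorm (d j) Lm Rm).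
Local Notation glued c1 q c2 := (@cfg_glue d n j (c1, (q, c2))).

Lemma contr_glue B : (forall k, k != j -> B k = A k) ->
  forall c1 q c2, contr D n B (glued c1 q c2) = env (B j) c1 q c2.
Proof.
move=> eqBA c1 q c2; rewrite (contr_split_at _ _ Dn lejn).
apply: eq_bigr => a _; apply: eq_bigr => b _; congr (_ * _ * _).
- apply: eq_seg => k in_k; rewrite /cfg_glue ifT; last by lia.
  by rewrite eqBA //; apply/eqP; lia.
- by rewrite /cfg_glue ltnn eqxx.
- apply: eq_seg => k in_k; rewrite /cfg_glue !ifF; try by apply/negbTE/negP; lia.
  by rewrite eqBA //; apply/eqP; lia.
Qed.

Lemma sumsq_contr B : (forall k, k != j -> B k = A k) ->
  \sum_(c : cfg d 1 n) contr D n B (cfg_nat c) ^+ 2 = env_sqn (B j).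
Proof.
move=> eqBA; rewrite (sum_cfg_glue d lejn (fun p => contr D n B p ^+ 2)).
apply: eq_bigr => c1 _; apply: eq_bigr => q _; apply: eq_bigr => c2 _.
by rewrite contr_glue.
Qed.

Lemma tnorm_contr_env B : (forall k, k != j -> B k = A k) ->
  tnorm d n (contr D n B) = Num.sqrt (env_sqn (B j)).
Proof. by move=> eqBA; rewrite /tnorm sumsq_contr. Qed.

Lemma relerr_env delta :
  relerr d D n A j delta = Num.sqrt (env_sqn delta) / Num.sqrt (env_sqn (A j)).
Proof.
rewrite /relerr tnorm_contr_env // /tnorm.
rewrite (sum_cfg_glue d lejn
  (fun p => (contr D n A p - contr D n (perturb A j delta) p) ^+ 2)).
congr (Num.sqrt _ / _).
apply: eq_bigr => c1 _; apply: eq_bigr => q _; apply: eq_bigr => c2 _.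
rewrite !contr_glue => [|k|//]; last by rewrite /perturb /replace => /negbTE ->.
rewrite /perturb /replace eqxx env_contrD.
by rewrite -sqrrN opprB addrAC subrr add0r.
Qed.

Lemma sqrt_env_sqnorm_canonical Y :
  canonical_at d D n A j -> Num.sqrt (env_sqn Y) = snorm d D j Y.
Proof.
move=> canon; rewrite -canon tnorm_contr_env ?/replace ?eqxx // => k.
by move=> /negbTE ->.
Qed.

Hypothesis T_neq0 : ~ (forall c : cfg d 1 n, contr D n A (cfg_nat c) = 0).

Lemma env_sqnorm_gt0 : 0 < env_sqn (A j).
Proof.
rewrite -sumsq_contr // lt_def sumr_ge0 ?andbT => [|c _]; last exact: sqr_ge0.
have [c0 c0_neq0|all0] := pickP (fun c : cfg d 1 n => contr D n A (cfg_nat c) != 0);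
  last by case: T_neq0 => c; apply/eqP; rewrite -[_ == 0]negbK all0.
apply: contra c0_neq0 => /eqP sum0; rewrite -sqrf_eq0.
by apply/eqP/(psumr_eq0P _ sum0) => // c _; apply: sqr_ge0.
Qed.

Lemma site_dims_gt0 : [&& 0 < D j.-1, 0 < d j & 0 < D j]%N.
Proof. exact: env_sqnorm_gt0_dims env_sqnorm_gt0. Qed.

Lemma Lmat_specnorm_spec : [/\ is_specnorm Lm (specnorm Lm), 0 <= specnorm Lm &
  exists2 x, vnorm x = 1 & vnorm (mxapp Lm x) = specnorm Lm].
Proof. by apply: specnorm_spec; case/and3P: site_dims_gt0. Qed.

Lemma Rmat_specnorm_spec : [/\ is_specnorm Rm (specnorm Rm), 0 <= specnorm Rm &
  exists2 x, vnorm x = 1 & vnorm (mxapp Rm x) = specnorm Rm].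
Proof. by apply: specnorm_spec; case/and3P: site_dims_gt0. Qed.

Lemma sqrt_env_sqnorm_le Y :
  Num.sqrt (env_sqn Y) <= specnorm Lm * specnorm Rm * snorm d D j Y.
Proof.
have [snL sL_ge0 _] := Lmat_specnorm_spec; have [snR sR_ge0 _] := Rmat_specnorm_spec.
apply: le_trans (ler_wsqrtr (env_sqnorm_le (d j) Y snL sL_ge0 snR sR_ge0)) _.
by rewrite -exprMn sqrtrM ?sqr_ge0 // sqrtr_sqr ger0_norm ?mulr_ge0.
Qed.

Lemma tnorm_contr : tnorm d n (contr D n A) = Num.sqrt (env_sqn (A j)).
Proof. exact: tnorm_contr_env. Qed.

Lemma tnorm_contr_gt0 : 0 < tnorm d n (contr D n A).
Proof. by rewrite tnorm_contr sqrtr_gt0 env_sqnorm_gt0. Qed.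

Local Notation gain :=
  (specnorm Lm * snorm d D j (A j) * specnorm Rm / tnorm d n (contr D n A)).

Lemma relerr_le_gain eps delta :
  snorm d D j delta <= eps * snorm d D j (A j) -> relerr d D n A j delta <= eps * gain.
Proof.
move=> le_delta; have [_ sL_ge0 _] := Lmat_specnorm_spec.
have [_ sR_ge0 _] := Rmat_specnorm_spec.
have -> : eps * gain = specnorm Lm * specnorm Rm * (eps * snorm d D j (A j))
                       / tnorm d n (contr D n A) by ring.
rewrite relerr_env -tnorm_contr ler_wpM2r ?invr_ge0 ?(ltW tnorm_contr_gt0) //.
by apply: le_trans (sqrt_env_sqnorm_le delta) _; rewrite ler_wpM2l ?mulr_ge0.
Qed.

Lemma gain_ge1 : 1 <= gain.
Proof.
rewrite ler_pdivlMr ?tnorm_contr_gt0 // mul1r tnorm_contr mulrAC.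
exact: sqrt_env_sqnorm_le.
Qed.

Lemma relerr_gain_attained eps : 0 <= eps ->
  exists delta, snorm d D j delta <= eps * snorm d D j (A j) /\
                relerr d D n A j delta = eps * gain.
Proof.
move=> eps_ge0; have [_ sL_ge0 [xL xL1 LxL]] := Lmat_specnorm_spec.
have [_ sR_ge0 [xR xR1 RxR]] := Rmat_specnorm_spec.
have /and3P[_ dj_gt0 _] := site_dims_gt0.
pose c := eps * snorm d D j (A j).
have c_ge0 : 0 <= c by rewrite mulr_ge0 ?sqrtr_ge0.
exists (fun a q b => c * rank1_site (Ordinal dj_gt0) xL xR a q b); split.
  by rewrite snormE site_sqnormZ site_sqnorm_rank1 xL1 xR1 expr1n !mulr1 sqrtr_sqr ger0_norm.
rewrite relerr_env env_sqnormZ env_sqnorm_rank1 LxL RxR -tnorm_contr -exprMn -exprMn.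
by rewrite sqrtr_sqr ger0_norm ?mulr_ge0 ?sqrtr_ge0 // /c; ring.
Qed.

Lemma relerr_le_canonical eps delta : canonical_at d D n A j ->
  snorm d D j delta <= eps * snorm d D j (A j) -> relerr d D n A j delta <= eps.
Proof.
move=> canon; rewrite relerr_env !sqrt_env_sqnorm_canonical // ler_pdivrMr //.
by rewrite -sqrt_env_sqnorm_canonical // sqrtr_gt0 env_sqnorm_gt0.
Qed.

Lemma relerr_canonical_attained eps : canonical_at d D n A j -> 0 <= eps ->
  exists delta, snorm d D j delta <= eps * snorm d D j (A j) /\
                relerr d D n A j delta = eps.
Proof.
move=> canon eps_ge0; exists (fun a q b => eps * A j a q b).
have snormZ : snorm d D j (fun a q b => eps * A j a q b) = eps * snorm d D j (A j).
  by rewrite !snormE site_sqnormZ sqrtrM ?sqr_ge0 // sqrtr_sqr ger0_norm.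
split; first by rewrite snormZ.
rewrite relerr_env !sqrt_env_sqnorm_canonical // snormZ mulfK // gt_eqF //.
by rewrite -sqrt_env_sqnorm_canonical // sqrtr_gt0 env_sqnorm_gt0.
Qed.

End SitePerturbation.

Theorem mainTheorem10 (R : rcfType) (n : nat) (d D : nat -> nat)
    (A : nat -> nat -> nat -> nat -> R) (j : nat) :
  D 0%N = 1%N -> D n = 1%N -> (1 <= j <= n)%N ->
  ~ (forall c : cfg d 1 n, contr D n A (cfg_nat c) = 0) ->
  let X := specnorm (Lmat d D A j) * snorm d D j (A j) * specnorm (Rmat d D n A j)
           / tnorm d n (contr D n A) in
  [/\ (exists (C eps0 : R), 0 < eps0 /\
        forall eps : R, 0 < eps -> eps <= eps0 ->
        forall delta : nat -> nat -> nat -> R,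
          snorm d D j delta <= eps * snorm d D j (A j) ->
          relerr d D n A j delta <= eps * X + C * eps ^+ 2),
      (canonical_at d D n A j ->
       exists (C eps0 : R), 0 < eps0 /\
        forall eps : R, 0 < eps -> eps <= eps0 ->
        forall delta : nat -> nat -> nat -> R,
          snorm d D j delta <= eps * snorm d D j (A j) ->
          relerr d D n A j delta <= eps + C * eps ^+ 2),
      (forall eps : R, 0 < eps ->
       exists delta : nat -> nat -> nat -> R,
         snorm d D j delta <= eps * snorm d D j (A j) /\
         relerr d D n A j delta = eps * X),
      (canonical_at d D n A j -> forall eps : R, 0 < eps ->
       exists delta : nat -> nat -> nat -> R,
         snorm d D j delta <= eps * snorm d D j (A j) /\
         relerr d D n A j delta = eps)
    & 1 <= X].
Proof.
(* The boundary bond b_0 is fixed to index 0 by [contr] and never summed over,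
   so [D 0 = 1] is not needed. *)
move=> _ Dn lejn T_neq0 X; split.
- exists 0, 1; split=> // eps _ _ delta le_delta.
  by rewrite mul0r addr0; apply: relerr_le_gain.
- move=> canon; exists 0, 1; split=> // eps _ _ delta le_delta.
  by rewrite mul0r addr0; apply: relerr_le_canonical.
- by move=> eps /ltW; apply: relerr_gain_attained.
- by move=> canon eps /ltW; apply: relerr_canonical_attained.
- exact: gain_ge1.
Qed.
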